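(* Let $D$ be a finite domain and let $\mathcal F$ be a family of functions of the form $f:D^L\to D$ (with $L$ ranging over positive integers). Then there exists a finite family $\Gamma$ of promise relations over $D$ such that $\mathcal F=\operatorname{poly}(\Gamma)$ if and only if $\mathcal F$ is projection-closed, finitizable, and contains the identity function $\operatorname{id}_D:D\to D$, $\operatorname{id}_D(x)=x$.
   Context: A promise relation over $D$ is a pair $(P,Q)$ with $P\subseteq Q\subseteq D^k$. $f:D^L\to D$ is a weak polymorphism of $(P,Q)$ if for all $x^{(1)},\dots,x^{(L)}\in P$, $(f(x^{(1)}_1,\dots,x^{(L)}_1),\dots,f(x^{(1)}_k,\dots,x^{(L)}_k))\in Q$; $\operatorname{poly}(\Gamma)$ is the set of functions that are weak polymorphisms of every member of $\Gamma$. For $f:D^L\to D$ and any map $\pi:[L]\to[R]$, the projection $f^\pi:D^R\to D$ is defined by $f^\pi(y)=f(x)$ where $x_i=y_{\pi(i)}$ for all $i\in[L]$. $\mathcal F$ is projection-closed if $f^\pi\in\mathcal F$ for all $f\in\mathcal F$ of arity $L$, all $R$, and all $\pi:[L]\to[R]$. $\mathcal F$ is finitizable if there exists $R\in\mathbb N$ such that for every $L$ and every $f:D^L\to D$, $f\in\mathcal F$ if and only if $f^\pi\in\mathcal F$ for all $\pi:[L]\to[R]$. *)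

From Stdlib Require List.
From mathcomp Require Import all_boot.
Set Implicit Arguments. Unset Strict Implicit. Unset Printing Implicit Defensive.

Section Defs.
Variable D : finType.

Definition fn (L : nat) := {ffun {ffun 'I_L -> D} -> D}.

Definition fun_family := forall L : nat, fn L -> Prop.

Record promise_rel := PromiseRel {
  pr_arity : nat;
  pr_P : {set {ffun 'I_pr_arity -> D}};
  pr_Q : {set {ffun 'I_pr_arity -> D}};
  pr_PQ : pr_P \subset pr_Q }.

(* f is a weak polymorphism of (P,Q): x l is the l-th tuple x^(l) in P *)
Definition weak_polymorphism (R : promise_rel) (L : nat) (f : fn L) : Prop :=
  forall x : 'I_L -> {ffun 'I_(pr_arity R) -> D},
    (forall l, x l \in pr_P R) ->
    [ffun j => f [ffun l => x l j]] \in pr_Q R.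

Definition poly (Gamma : seq promise_rel) : fun_family :=
  fun L f => 0 < L /\ forall R, List.In R Gamma -> weak_polymorphism R f.

Definition proj (L R : nat) (f : fn L) (pi : 'I_L -> 'I_R) : fn R :=
  [ffun y : {ffun 'I_R -> D} => f [ffun i => y (pi i)]].

Definition projection_closed (F : fun_family) : Prop :=
  forall (L R : nat) (f : fn L) (pi : 'I_L -> 'I_R), F L f -> F R (proj f pi).

Definition finitizable (F : fun_family) : Prop :=
  exists R : nat, forall (L : nat) (f : fn L), 0 < L ->
    (F L f <-> forall pi : 'I_L -> 'I_R, F R (proj f pi)).

Definition id_fn : fn 1 := [ffun x : {ffun 'I_1 -> D} => x ord0].

End Defs.

(** Weak polymorphisms of a fixed promise relation (P,Q) are closed under
  projections, and f is one as soon as all its projections to arity #|P| are: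
  the L tuples of P that f is applied to take at most #|P| distinct values,
  so they factor through a map [L] -> [#|P|].  Conversely, if F is finitized
  by R, index coordinates by the points y of D^R and let P consist of the R
  dictator tuples (y |-> y_i) and Q of the tuples (y |-> h y) for h in F of
  arity R; P is inside Q because dictators are projections of the identity.
  Applying f columnwise to dictator tuples i_1..i_L yields the tuple of the
  projection of f along l |-> i_l, so f is a weak polymorphism of (P,Q)
  exactly when all its projections to arity R lie in F. *)

From mathcomp Require Import all_boot boolp.

Set Implicit Arguments.
Unset Strict Implicit.
Unset Printing Implicit Defensive.

Section WeakPolymorphisms.
Variable D : finType.

Definition colwise L k (f : fn D L) (x : 'I_L -> {ffun 'I_k -> D}) :
    {ffun 'I_k -> D} :=
  [ffun j => f [ffun l => x l j]].

Lemma colwise_proj L n k (f : fn D L) (pi : 'I_L -> 'I_n)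
    (x : 'I_n -> {ffun 'I_k -> D}) :
  colwise (proj f pi) x = colwise f (x \o pi).
Proof.
apply/ffunP => j; rewrite !ffunE; congr (f _).
by apply/ffunP => l; rewrite !ffunE.
Qed.

Lemma weak_polymorphism_proj (r : promise_rel D) L n (f : fn D L)
    (pi : 'I_L -> 'I_n) :
  weak_polymorphism r f -> weak_polymorphism r (proj f pi).
Proof.
move=> wf x xP; rewrite -[_ \in _]/(colwise _ x \in _) colwise_proj.
exact: wf (x \o pi) (fun l => xP (pi l)).
Qed.

Lemma weak_polymorphism_id (r : promise_rel D) : weak_polymorphism r (id_fn D).
Proof.
move=> x xP; have -> : [ffun j => id_fn D [ffun l => x l j]] = x ord0.
  by apply/ffunP => j; rewrite !ffunE.
exact: subsetP (pr_PQ r) _ (xP ord0).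
Qed.

Lemma weak_polymorphism_from_proj (r : promise_rel D) L n (f : fn D L) :
    0 < L -> #|pr_P r| <= n ->
    (forall pi : 'I_L -> 'I_n, weak_polymorphism r (proj f pi)) ->
  weak_polymorphism r f.
Proof.
move=> L_gt0 Pn wf x xP.
pose s := enum (pr_P r); pose x0 := x (Ordinal L_gt0).
have xs l : x l \in s by rewrite mem_enum.
have index_lt l : index (x l) s < n.
  by apply: leq_trans Pn; rewrite cardE index_mem.
pose pi l : 'I_n := Ordinal (index_lt l).
pose y (i : 'I_n) := nth x0 s i.
have yP i : y i \in pr_P r.
  rewrite /y; case: (ltnP i (size s)) => [i_lt | i_ge].
    by rewrite -mem_enum mem_nth.
  by rewrite nth_default //; apply: xP.
have y_pi l : y (pi l) = x l by rewrite /y nth_index.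
have -> : x = y \o pi by apply: funext => l /=; rewrite y_pi.
rewrite -[_ \in _]/(colwise f _ \in _) -colwise_proj.
exact: wf pi y yP.
Qed.

Definition max_promise_size (G : seq (promise_rel D)) : nat :=
  \max_(r <- G) #|pr_P r|.

Lemma leq_max_promise_size (G : seq (promise_rel D)) r :
  List.In r G -> #|pr_P r| <= max_promise_size G.
Proof.
rewrite /max_promise_size; elim: G => //= r' G IH; rewrite big_cons.
by case=> [-> | /IH le_r]; rewrite leq_max ?leqnn // le_r orbT.
Qed.

Lemma poly_projection_closed (G : seq (promise_rel D)) :
  projection_closed (poly G).
Proof.
move=> L n f pi [L_gt0 wf]; split; last first.
  by move=> r /wf; apply: weak_polymorphism_proj.
by case: L pi {f wf} L_gt0 => // L pi _; apply: leq_ltn_trans (ltn_ord (pi ord0)).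
Qed.

Lemma poly_finitizable (G : seq (promise_rel D)) : finitizable (poly G).
Proof.
exists (max_promise_size G) => L f L_gt0; split.
  by move=> polyf pi; apply: poly_projection_closed.
move=> polyf; split=> // r rG.
apply: weak_polymorphism_from_proj L_gt0 (leq_max_promise_size rG) _ => pi.
by case: (polyf pi) => _; apply.
Qed.

Lemma poly_id (G : seq (promise_rel D)) : poly G (id_fn D).
Proof. by split=> // r _; apply: weak_polymorphism_id. Qed.

Section FamilyRelation.
Variables (F : fun_family D) (R : nat).

Definition dictator (i : 'I_R) : fn D R := proj (id_fn D) (fun _ => i).

Hypothesis F_dictator : forall i, F (dictator i).

Definition table (h : fn D R) : {ffun 'I_#|{ffun 'I_R -> D}| -> D} :=
  [ffun j => h (enum_val j)].

Lemma table_inj : injective table.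
Proof.
move=> h1 h2 eq_h; apply/ffunP => y.
by move/ffunP/(_ (enum_rank y)): eq_h; rewrite !ffunE enum_rankK.
Qed.

Lemma colwise_table_dictator L (f : fn D L) (pi : 'I_L -> 'I_R) :
  colwise f (fun l => table (dictator (pi l))) = table (proj f pi).
Proof.
apply/ffunP => j; rewrite !ffunE; congr (f _).
by apply/ffunP => l; rewrite !ffunE.
Qed.

Definition family_rel_P := [set table (dictator i) | i : 'I_R].
Definition family_rel_Q := [set table h | h in [pred h | `[< F h >]]].

Lemma family_rel_PQ : family_rel_P \subset family_rel_Q.
Proof.
apply/subsetP => _ /imsetP [i _ ->].
by apply: imset_f; rewrite inE; apply/asboolP.
Qed.

Definition family_rel := PromiseRel family_rel_PQ.

Lemma weak_polymorphism_family_relP L (f : fn D L) :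
  weak_polymorphism family_rel f <-> forall pi : 'I_L -> 'I_R, F (proj f pi).
Proof.
split=> [wf pi | Ff x xP].
  have dictP l : table (dictator (pi l)) \in pr_P family_rel.
    by apply/imsetP; exists (pi l).
  have := wf _ dictP.
  rewrite -[_ \in _]/(colwise _ _ \in _) colwise_table_dictator.
  by case/imsetP=> h; rewrite inE => /asboolP Fh /table_inj ->.
have /fin_all_exists [pi x_pi] : forall l, exists i, x l = table (dictator i).
  by move=> l; case/imsetP: (xP l) => i _ ->; exists i.
have -> : x = fun l => table (dictator (pi l)) by apply: funext.
rewrite -[_ \in _]/(colwise _ _ \in _) colwise_table_dictator.
by apply: imset_f; rewrite inE; apply/asboolP.
Qed.

End FamilyRelation.
End WeakPolymorphisms.

Theorem theoremE1 (D : finType) (F : fun_family D)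
    (HF : forall f : fn D 0, ~ F 0 f) :
  (exists Gamma : seq (promise_rel D), forall (L : nat) (f : fn D L),
      F L f <-> poly Gamma f)
  <-> (projection_closed F /\ finitizable F /\ F 1 (@id_fn D)).
Proof.
split=> [[G FG] | [F_proj [[R F_fin] F_id]]].
  split; [|split]; last by apply/FG/poly_id.
    by move=> L n f pi /FG /poly_projection_closed Fpi; apply/FG/Fpi.
  have [n poly_fin] := poly_finitizable G.
  exists n => L f L_gt0; rewrite FG poly_fin //.
  by split=> Ff pi; apply/FG/Ff.
have F_dictator (i : 'I_R) : F R (dictator D i) by apply: F_proj.
exists [:: family_rel F_dictator] => L f; split=> [Ff | [L_gt0 wf]].
  split; first by case: L f Ff => // f /HF.
  by move=> r [<- | []]; apply/weak_polymorphism_family_relP => pi; apply: F_proj.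
by apply/F_fin => //; apply/weak_polymorphism_family_relP/wf; left.
Qed.
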